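(* Let $p\ge 4$ and let $\Sigma\in\mathbb{R}^{p\times p}$ be positive definite. Then $\Sigma\in F_{p,1}\setminus F_{p,0}$ if and only if every $4\times 4$ principal submatrix of $\Sigma$ belongs to $F_{4,1}$ and at least one $2\times 2$ principal submatrix of $\Sigma$ does not belong to $F_{2,0}$.
   Context: For integers $p\ge 1$, $m\ge 1$, $F_{p,m}=\{\Delta+\Gamma\Gamma^t : \Delta \text{ a positive definite diagonal } p\times p \text{ matrix},\ \Gamma\in\mathbb{R}^{p\times m}\}$. $F_{p,0}$ is the set of positive definite diagonal $p\times p$ matrices. *)

(* Real matrices are stated over an arbitrary real closed field R. *)
From HB Require Import structures.
From mathcomp Require Import all_boot all_order all_algebra.
Set Implicit Arguments. Unset Strict Implicit. Unset Printing Implicit Defensive.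
Import Order.TTheory GRing.Theory Num.Theory.
Local Open Scope ring_scope.

Definition posdef (R : rcfType) (p : nat) (A : 'M[R]_p) : Prop :=
  A^T = A /\ forall v : 'cV[R]_p, v != 0 -> 0 < (v^T *m A *m v) 0 0.

Definition inF0 (R : rcfType) (p : nat) (S : 'M[R]_p) : Prop :=
  is_diag_mx S /\ posdef S.

Definition inF (R : rcfType) (p m : nat) (S : 'M[R]_p) : Prop :=
  exists (D : 'M[R]_p) (G : 'M[R]_(p, m)), inF0 D /\ S = D + G *m G^T.

Definition incr_sel (k p : nat) (f : 'I_k -> 'I_p) : Prop :=
  forall i j : 'I_k, (i < j)%N -> (f i < f j)%N.

Definition principal_sub (R : rcfType) (k p : nat) (f : 'I_k -> 'I_p) (S : 'M[R]_p)
  : 'M[R]_k := mxsub f f S.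

From HB Require Import structures.
From mathcomp Require Import all_boot all_order all_algebra.
Import Order.TTheory GRing.Theory Num.Theory.
Local Open Scope ring_scope.

(* A matrix lies in F_{p,1} iff it admits a loading vector x with
   S_ij = x_i x_j off the diagonal and x_i^2 < S_ii on it (inF1P).  This
   description passes to principal submatrices (inF_sub), which gives the
   forward direction; and for positive definite S, leaving F_{p,0} just means
   having a nonzero off-diagonal entry, which a 2 x 2 principal submatrix
   detects (not_inF0P, pair_not_inF0P).

   For the converse, assume every 4 x 4 principal submatrix is in F_{4,1}, so
   every 4-element index set carries a local loading vector (factor_on_sel),
   and let S_ab <> 0.  The local vectors yield the tetrad identities
   S_ij S_kl = S_ik S_jl.  A global loading vector is then read off row a
   once the scale s = x_a is fixed (factor_from_row): if some S_ac <> 0 with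
   c <> b, the triad identity x_a^2 S_bc = S_ab S_ac pins s down uniformly
   (extend_rich); otherwise row a, row b and all remaining off-diagonal
   entries vanish except S_ab, and any local scale works (extend_poor). *)

Set Implicit Arguments.
Unset Strict Implicit.

Section DiagonalMatrices.
Variable R : rcfType.

Lemma quad_diag p (D : 'M[R]_p) (v : 'cV[R]_p) : is_diag_mx D ->
  (v^T *m D *m v) 0 0 = \sum_i D i i * v i 0 ^+ 2.
Proof.
move=> /is_diag_mxP dD; rewrite !mxE; apply: eq_bigr => k _.
rewrite !mxE (bigD1 k) //= big1 ?addr0 => [|l hl]; last by rewrite dD ?mulr0.
by rewrite mxE expr2 mulrAC mulrC.
Qed.

Lemma diag_posdef p (D : 'M[R]_p) : is_diag_mx D -> (forall i, 0 < D i i) -> posdef D.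
Proof.
move=> dD D_gt0; split.
  apply/matrixP => i j; rewrite mxE; have [->//|hij] := eqVneq i j.
  by move/is_diag_mxP: dD => dD; rewrite !dD // eq_sym.
move=> v v0; rewrite quad_diag //.
have [k vk] : exists k, v k 0 != 0.
  apply/existsP; apply: contraR v0 => /existsPn v0.
  by apply/eqP/matrixP => i j; rewrite ord1 mxE; apply/eqP/negbNE.
rewrite (bigD1 k) //= ltr_pwDl ?sumr_ge0 // => [|i _].
  by rewrite mulr_gt0 // lt0r sqr_ge0 sqrf_eq0 vk.
by rewrite mulr_ge0 ?sqr_ge0 ?ltW.
Qed.

Lemma posdef_diag_gt0 p (A : 'M[R]_p) : posdef A -> forall i, 0 < A i i.
Proof.
move=> [_ A_pos] i; have := A_pos (delta_mx i 0).
rewrite trmx_delta -rowE -colE !mxE; apply.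
by apply/negP => /eqP/matrixP/(_ i 0); rewrite !mxE !eqxx /= => /eqP; rewrite oner_eq0.
Qed.

Lemma posdef_sym p (A : 'M[R]_p) : posdef A -> forall i j, A i j = A j i.
Proof. by move=> [/matrixP A_sym _] i j; rewrite -[LHS]A_sym mxE. Qed.

Lemma inF0_diagE k (S : 'M[R]_k) : (forall i, 0 < S i i) -> inF0 S <-> is_diag_mx S.
Proof. by move=> S_gt0; split=> [[]//|dS]; split; last exact: diag_posdef. Qed.

Lemma not_diagP k (S : 'M[R]_k) :
  ~ is_diag_mx S <-> exists i j : 'I_k, i != j /\ S i j != 0.
Proof.
split=> [nd|[i [j [hij sij]]] /is_diag_mxP dS]; last by rewrite dS ?eqxx in sij.
move/negP: nd => /forallPn [i /forallPn [j]]; rewrite negb_imply => /andP [hij sij].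
by exists i, j.
Qed.

End DiagonalMatrices.

Section OneFactor.
Variable R : rcfType.

Definition factor_on p (S : 'M[R]_p) (Q : seq 'I_p) (x : 'I_p -> R) : Prop :=
  {in Q &, forall i j, i != j -> S i j = x i * x j} /\
  {in Q, forall i, x i ^+ 2 < S i i}.

Lemma inF1P p (S : 'M[R]_p) : inF 1 S <-> exists x, factor_on S (enum 'I_p) x.
Proof.
split=> [[D [G [[/is_diag_mxP dD Dpd] ->]]] | [x [x_off x_diag]]].
  have entry i j : (D + G *m G^T) i j = D i j + G i 0 * G j 0.
    by rewrite !mxE big_ord1 !mxE.
  exists (fun i => G i 0); split=> [i j _ _ hij | i _].
    by rewrite entry dD ?add0r.
  by rewrite entry expr2 ltrDr posdef_diag_gt0.
exists (diag_mx (\row_i (S i i - x i ^+ 2))), (\col_i x i); split.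
  split; first exact: diag_mx_is_diag.
  apply: diag_posdef => [|i]; first exact: diag_mx_is_diag.
  by rewrite !mxE eqxx mulr1n subr_gt0 x_diag ?mem_enum.
apply/matrixP => i j; rewrite !mxE big_ord1 !mxE.
have [<-|hij] := eqVneq i j; first by rewrite mulr1n expr2 subrK.
by rewrite mulr0n add0r x_off ?mem_enum.
Qed.

Lemma inF_sub m k p (f : 'I_k -> 'I_p) (S : 'M[R]_p) :
  injective f -> inF m S -> inF m (principal_sub f S).
Proof.
move=> f_inj [D [G [[/is_diag_mxP dD Dpd] ->]]].
have dDf : is_diag_mx (principal_sub f D).
  apply/is_diag_mxP => i j hij; rewrite mxE dD //.
  by apply: contra hij => /eqP/val_inj/f_inj ->.
exists (principal_sub f D), (rowsub f G); split.
  split=> //; apply: diag_posdef => // i.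
  by rewrite mxE posdef_diag_gt0.
apply/matrixP => i j; rewrite !mxE; congr (_ + _).
by apply: eq_bigr => l _; rewrite !mxE.
Qed.

End OneFactor.

Lemma incr_sel_inj k p (f : 'I_k -> 'I_p) : incr_sel f -> injective f.
Proof.
move=> f_incr i j fij; apply/val_inj/eqP; apply: contraTT (eqxx (val (f i))).
rewrite neq_ltn => /orP [] /f_incr; rewrite neq_ltn ?fij ?ltnn //.
Qed.

Lemma incr_enum p (x0 : 'I_p) (A : {set 'I_p}) k : #|A| = k ->
  exists f : 'I_k -> 'I_p, incr_sel f /\ forall u, u \in A -> exists i, f i = u.
Proof.
move=> cardA.
have size_enumA : size (enum A) = k by rewrite -cardE.
have enumA_sorted : sorted ltn (map val (enum A)).
  rewrite -[enum _](eq_filter (mem_enum _)).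
  rewrite -(eq_filter (mem_map val_inj _)) -filter_map.
  by rewrite (sorted_filter ltn_trans) // unlock val_ord_enum iota_ltn_sorted.
exists (fun i => nth x0 (enum A) i); split=> [i j ij | u uA].
  have := sorted_ltn_nth ltn_trans (val x0) enumA_sorted i j.
  by rewrite !size_map size_enumA !(nth_map x0) ?size_enumA // !inE !ltn_ord; apply.
have lt_idx : (index u (enum A) < k)%N by rewrite -size_enumA index_mem mem_enum.
by exists (Ordinal lt_idx); rewrite /= nth_index // mem_enum.
Qed.

Lemma factor_on_sel (R : rcfType) k p (S : 'M[R]_p) :
  (forall f : 'I_k -> 'I_p, incr_sel f -> inF 1 (principal_sub f S)) ->
  forall s : seq 'I_p, uniq s -> size s = k -> exists x, factor_on S s x.
Proof.
move=> Fk [|x0 s0] s_uniq size_s; first by exists (fun=> 0).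
have cardA : #|[set u in x0 :: s0]| = k by rewrite cardsE (card_uniqP s_uniq).
have [f [f_incr f_onto]] := incr_enum x0 cardA.
have [y [y_off y_diag]] := (inF1P _).1 (Fk f f_incr).
pose x u := if [pick i | f i == u] is Some i then y i else 0.
have x_f i : x (f i) = y i.
  rewrite /x; case: pickP => [j /eqP/(incr_sel_inj f_incr) -> // |].
  by move/(_ i); rewrite eqxx.
have onto u : u \in x0 :: s0 -> exists i, f i = u.
  by move=> us; apply: f_onto; rewrite inE.
exists x; split=> [_ _ /onto [i <-] /onto [j <-] fij | _ /onto [i <-]].
  rewrite !x_f -(y_off i j) ?mem_enum ?mxE //.
  by apply: contra fij => /eqP ->.
by rewrite x_f; have := y_diag i (mem_enum _ _); rewrite mxE.
Qed.

Lemma fresh_index p (s : seq 'I_p) : (size s < p)%N -> exists d, d \notin s.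
Proof.
move=> size_s; apply/existsP; apply: contraTT size_s => /existsPn all_in.
rewrite -leqNgt -[X in (X <= _)%N]card_ord (leq_trans _ (card_size s)) //.
by apply/subset_leq_card/subsetP => d _; apply/negbNE.
Qed.

Section OneFactorExtension.
Variables (R : rcfType) (p : nat) (S : 'M[R]_p).
Hypothesis S_sym : forall i j, S i j = S j i.

(* Algebraic identity on a set carrying a loading vector x:
   x_a^2 S_bc = S_ab S_ac, i.e. the scale of the loading at a is determined
   by any nonvanishing triad. *)
Lemma triad_scale Q x a b c : factor_on S Q x ->
  a \in Q -> b \in Q -> c \in Q -> a != b -> a != c -> b != c ->
  x a ^+ 2 * S b c = S a b * S a c.
Proof.
move=> [x_off _] aQ bQ cQ ab ac bc.
by rewrite !x_off // expr2 mulrACA.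
Qed.

Lemma row_bound Q x a i s : factor_on S Q x -> a \in Q -> i \in Q -> i != a ->
  s != 0 -> x a ^+ 2 = s ^+ 2 -> (S a i / s) ^+ 2 < S i i.
Proof.
move=> [x_off x_diag] aQ iQ ia s0 xa_s.
rewrite x_off // 1?eq_sym // expr_div_n exprMn xa_s mulrAC divff ?mul1r ?expf_neq0 //.
exact: x_diag.
Qed.

Lemma factor_from_row a s : s != 0 ->
  (forall i j, i != a -> j != a -> i != j -> S i j * s ^+ 2 = S a i * S a j) ->
  s ^+ 2 < S a a -> (forall i, i != a -> (S a i / s) ^+ 2 < S i i) ->
  inF 1 S.
Proof.
move=> s0 row_off a_bound row_bounds.
apply/inF1P; exists (fun i => if i == a then s else S a i / s).
split=> [i j _ _ | i _].
  have [-> | ia] := eqVneq i a; have [-> | ja] := eqVneq j a => // ij.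
  - by rewrite mulrC divfK.
  - by rewrite S_sym divfK.
  apply: (mulIf (expf_neq0 2 s0)); rewrite row_off // expr2 mulrACA !divfK //.
by have [-> // | ia] := eqVneq i a; apply: row_bounds.
Qed.

Hypothesis S_four : forall s : seq 'I_p, uniq s -> size s = 4%N ->
  exists x, factor_on S s x.

Lemma tetrad i j k l : i != j -> k != l -> i != k -> j != l ->
  S i j * S k l = S i k * S j l.
Proof.
move=> ij kl ik jl.
have [-> | il] := eqVneq i l; first by rewrite (S_sym k) (S_sym j) mulrC.
have [-> // | jk] := eqVneq j k.
have uniq_ijkl : uniq [:: i; j; k; l] by rewrite /= !inE !negb_or ij ik il jk jl kl.
have [x [x_off _]] := S_four uniq_ijkl (erefl _).
by rewrite !x_off ?inE ?eqxx ?orbT // mulrACA.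
Qed.

Lemma tetrad_row a b c i j : a != b -> a != c -> b != c ->
  i != a -> j != a -> i != j ->
  S i j * (S a b * S a c) = S a i * S a j * S b c.
Proof.
move=> ab ac bc.
wlog jb : i j / j != b => [W ia ja ij | ia ja ij].
  have [jb' | jb] := eqVneq j b; last exact: W.
  rewrite S_sym [S a i * _]mulrC; apply: W => //; first by rewrite -jb'.
  by rewrite eq_sym.
rewrite mulrA (tetrad ij ab ia jb) -mulrA (tetrad jb ac ja bc).
by rewrite mulrA (S_sym i a) (S_sym j a).
Qed.

Hypothesis p_ge4 : (4 <= p)%N.

Lemma four_set_through (a b c i : 'I_p) : uniq [:: a; b; c] ->
  exists d, uniq [:: a; b; c; d] /\ i \in [:: a; b; c; d].
Proof.
move=> abc.
suff [d [nd id]] : exists d, d \notin [:: a; b; c] /\ i \in rcons [:: a; b; c] d.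
  by exists d; rewrite -[[:: a; b; c; d]]/(rcons [:: a; b; c] d) rcons_uniq nd.
have [iabc | niabc] := boolP (i \in [:: a; b; c]).
  have [d nd] := fresh_index (s := [:: a; b; c]) p_ge4.
  by exists d; rewrite mem_rcons inE iabc orbT.
by exists i; rewrite mem_rcons mem_head.
Qed.

(* A vanishing entry in row a propagates to row b when S_ab <> 0: within a
   4-set through a, b, j the loading x_a is nonzero, so x_j = 0. *)
Lemma row_zero_propagates a b j : a != b -> j != a -> j != b ->
  S a b != 0 -> S a j = 0 -> S b j = 0.
Proof.
move=> ab ja jb sab saj.
have abj : uniq [:: a; b; j] by rewrite /= !inE !negb_or ab !(eq_sym _ j) ja jb.
have [e [abje _]] := four_set_through j abj.
have [y [y_off _]] := S_four abje (erefl _).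
have in_abje u : u \in [:: a; b; j] -> u \in [:: a; b; j; e].
  by rewrite !inE => /or3P [] ->; rewrite ?orbT.
have ya0 : y a != 0.
  by apply: contraNneq sab => ya0; rewrite y_off ?in_abje ?inE ?eqxx ?orbT // ya0 mul0r.
have : y a * y j = 0 by rewrite -saj y_off ?in_abje ?inE ?eqxx ?orbT // eq_sym.
move/eqP; rewrite mulf_eq0 (negbTE ya0) /= => /eqP yj0.
by rewrite y_off ?in_abje ?inE ?eqxx ?orbT 1?eq_sym // yj0 mulr0.
Qed.

(* Case of a second nonzero entry S_ac in row a: the triad identity fixes
   the scale x_a^2 = S_ab S_ac / S_bc, common to all 4-sets through a, b, c. *)
Lemma extend_rich a b c : a != b -> a != c -> b != c ->
  S a b != 0 -> S a c != 0 -> inF 1 S.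
Proof.
move=> ab ac bc sab sac.
have abc : uniq [:: a; b; c] by rewrite /= !inE !negb_or ab ac bc.
have [d [abcd _]] := four_set_through a abc.
have [x x_on] := S_four abcd (erefl _).
have x_scale : x a ^+ 2 * S b c = S a b * S a c.
  by apply: (triad_scale x_on) => //; rewrite !inE eqxx ?orbT.
have t0 : S a b * S a c != 0 by rewrite mulf_neq0.
have sbc : S b c != 0 by apply: contraNneq t0 => sbc0; rewrite -x_scale sbc0 mulr0.
have xa0 : x a != 0 by apply: contraNneq t0 => xa0; rewrite -x_scale xa0 expr2 !mul0r.
apply: (factor_from_row (a := a) xa0) => [i j ia ja ij | | i ia].
- by apply: (mulIf sbc); rewrite -mulrA x_scale tetrad_row.
- by apply: x_on.2; rewrite inE eqxx.
have [e [abce ie]] := four_set_through i abc.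
have [y y_on] := S_four abce (erefl _).
apply: (row_bound y_on) => //; first by rewrite inE eqxx.
apply: (mulIf sbc); rewrite x_scale.
by apply: (triad_scale y_on) => //; rewrite !inE eqxx ?orbT.
Qed.

Hypothesis S_diag : forall i, 0 < S i i.

(* Case where S_ab is the only nonzero entry of row a off the diagonal: then
   S_ab is the only nonzero off-diagonal entry at all, and the loading vector
   of any 4-set through a and b, extended by zero, is global. *)
Lemma extend_poor a b : a != b -> S a b != 0 ->
  (forall c, c != a -> c != b -> S a c = 0) -> inF 1 S.
Proof.
move=> ab sab row_a.
have off_zero i j : i != a -> j != a -> i != j -> S i j = 0.
  move=> ia ja ij; have [ib | ib] := eqVneq i b.
    have jb : j != b by rewrite -ib eq_sym.
    by rewrite ib (row_zero_propagates ab) // row_a.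
  have [jb | jb] := eqVneq j b; first by rewrite S_sym jb (row_zero_propagates ab) // row_a.
  by apply: (mulIf sab); rewrite tetrad // S_sym row_a // !mul0r.
have [c c_ab] := fresh_index (s := [:: a; b]) (leq_trans (isT : 2 < 4)%N p_ge4).
move: c_ab; rewrite !inE negb_or => /andP [ca cb].
have abc : uniq [:: a; b; c] by rewrite /= !inE !negb_or ab !(eq_sym _ c) ca cb.
have [d [abcd _]] := four_set_through a abc.
have [x x_on] := S_four abcd (erefl _).
have xab : S a b = x a * x b by apply: x_on.1; rewrite ?inE ?eqxx ?orbT.
have xa0 : x a != 0 by apply: contraNneq sab => xa0; rewrite xab xa0 mul0r.
apply: (factor_from_row (a := a) xa0) => [i j ia ja ij | | i ia].
- rewrite off_zero // mul0r; have [ib | ib] := eqVneq i b; last by rewrite row_a ?mul0r.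
  by rewrite (row_a j) ?mulr0 // -ib eq_sym.
- by apply: x_on.2; rewrite inE eqxx.
have [-> | ib] := eqVneq i b; last by rewrite row_a // mul0r expr2 mul0r S_diag.
by apply: (row_bound x_on) => //; rewrite ?inE ?eqxx ?orbT // eq_sym.
Qed.

Lemma extend_pair a b : a != b -> S a b != 0 -> inF 1 S.
Proof.
move=> ab sab.
have [/existsP [c /and3P [ca cb sac]] | none] :=
  boolP [exists c, [&& c != a, c != b & S a c != 0]].
  by apply: (extend_rich ab _ _ sab sac); rewrite eq_sym.
apply: (extend_poor ab sab) => c ca cb; apply/eqP.
by apply: contraNT none => sac; apply/existsP; exists c; rewrite ca cb.
Qed.

End OneFactorExtension.

Section DiagonalPairs.
Variable R : rcfType.

Lemma not_inF0P k (S : 'M[R]_k) : (forall i, 0 < S i i) ->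
  ~ inF0 S <-> exists i j, i != j /\ S i j != 0.
Proof.
move=> S_gt0; split=> [nF0 | /not_diagP nd /(inF0_diagE S_gt0)//].
by apply/not_diagP => dS; apply/nF0/(inF0_diagE S_gt0).
Qed.

Lemma pair_not_inF0P p (S : 'M[R]_p) : posdef S ->
  (exists f : 'I_2 -> 'I_p, incr_sel f /\ ~ inF0 (principal_sub f S)) <->
  exists i j, i != j /\ S i j != 0.
Proof.
move=> Spd; have sub_gt0 (f : 'I_2 -> 'I_p) i : 0 < principal_sub f S i i.
  by rewrite mxE posdef_diag_gt0.
split=> [[f [f_incr /(not_inF0P (sub_gt0 f)) [i [j [ij sij]]]]] | [i [j [ij sij]]]].
  rewrite mxE in sij.
  by exists (f i), (f j); rewrite (inj_eq (incr_sel_inj f_incr)).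
wlog lt_ij : i j ij sij / (i < j)%N => [W | ].
  case: (ltngtP i j) => [| gt_ij | eq_ij]; first exact: W.
    by apply: (W j i) => //; [rewrite eq_sym | rewrite (posdef_sym Spd)].
  by move: ij; rewrite (val_inj eq_ij) eqxx.
pose f (k : 'I_2) := if val k == 0%N then i else j.
exists f; split; first by move=> [[|[|?]] ?] [[|[|?]] ?].
by apply/(not_inF0P (sub_gt0 f)); exists ord0, ord_max; rewrite mxE.
Qed.

End DiagonalPairs.

Unset Implicit Arguments.

Theorem theorem2 (R : rcfType) (p : nat) (Sigma : 'M[R]_p) :
  (4 <= p)%N -> posdef Sigma ->
  ((inF 1 Sigma /\ ~ inF0 Sigma) <->
   ((forall f : 'I_4 -> 'I_p, incr_sel f -> inF 1 (principal_sub f Sigma)) /\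
    (exists f : 'I_2 -> 'I_p, incr_sel f /\ ~ inF0 (principal_sub f Sigma)))).
Proof.
move=> p_ge4 Spd.
have nF0E := not_inF0P (posdef_diag_gt0 Spd).
split=> [[SF1 /nF0E nz] | [F4 /(pair_not_inF0P Spd) [a [b [ab sab]]]]].
  split; last exact/(pair_not_inF0P Spd).
  by move=> f f_incr; apply: inF_sub SF1; apply: incr_sel_inj.
split; last by apply/nF0E; exists a, b.
apply: (extend_pair (posdef_sym Spd) (factor_on_sel F4) p_ge4 _ ab sab).
exact: posdef_diag_gt0.
Qed.
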